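(* Let $T>0$, $M$ and $N$ be positive integers, $\tau=T/M$, $t_k=k\tau$ ($k=0,\dots,M$), $h=1/N$ and $x_r=rh$ ($r=0,\dots,N$). Let $u:\Omega=[0,1]\times[0,T]\to\mathbb{R}$ be such that $\partial_x^4 u$ is continuous on $\Omega$, and write $u_{k}(x)=u(x,t_{k})$. Let $1<\beta<2$ and $0\le k\le M-1$. For an integer $m\ge 1$ and $\eta>0$ put $c^{\eta}_m=\frac{(m-1)^{\eta}-m^{\eta}}{\eta}$, and set $\nu_h^{\beta}=\frac{h^{2-\beta}}{\Gamma(2-\beta)}$. For $1\le r\le N-1$ define the weights $w^{\beta}_{j,r}$, $j=0,\dots,r$, by \[ w^{\beta}_{j,r}=\tilde w^{\beta}_{j-1,0}-\tilde w^{\beta}_{j,1}, \] where $\tilde w^{\beta}_{-1,0}=0$, $\tilde w^{\beta}_{r,1}=0$, and for $\rho\in\{0,1\}$ and $m=1,\dots,r$, \[ \tilde w^{\beta}_{r-m,\rho}=c^{3-\beta}_{m}-(m-\rho)\,c^{2-\beta}_{m}. \] (Equivalently: $w^{\beta}_{0,r}=-\big(c^{3-\beta}_r-(r-1)c^{2-\beta}_r\big)$, $w^{\beta}_{r,r}=c^{3-\beta}_1-c^{2-\beta}_1$, and for $1\le j\le r-1$, $w^{\beta}_{j,r}=\big(c^{3-\beta}_{r-j+1}-(r-j+1)c^{2-\beta}_{r-j+1}\big)-\big(c^{3-\beta}_{r-j}-(r-j-1)c^{2-\beta}_{r-j}\big)$.) Then for $r=1,\dots,N-1$, \[ D_x^{\beta}u_{k+1}(x_r)=\nu_h^{\beta}\sum_{j=0}^{r}w^{\beta}_{j,r}\,u_{k+1}''(x_j)+R_h^{\beta}(r),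 \] where the remainder satisfies \[ \|R_h^{\beta}\|_{\infty}\le\frac{h^{2}\mathcal{M}_u}{8\,\Gamma(3-\beta)},\qquad \mathcal{M}_u=\sup_{(x,t)\in\Omega}\Big|\frac{\partial^4 u}{\partial x^4}(x,t)\Big|. \]
   Context: For $1<\beta<2$, the Caputo derivative in $x$ is $D_x^{\beta}f(x)=\frac{1}{\Gamma(2-\beta)}\int_0^{x}(x-s)^{1-\beta}f''(s)\,ds$ for $x>0$. Here $u_{k+1}''$ denotes the second derivative of $x\mapsto u(x,t_{k+1})$, and $\|R_h^\beta\|_\infty$ denotes the maximum of $|R_h^\beta(r)|$ over $r=1,\dots,N-1$. *)

From Stdlib Require Import Reals Lra.
From Coquelicot Require Import Coquelicot.
Open Scope R_scope.

(* Real power with the convention 0^a = 0 (and x^a = exp(a ln x) for x > 0).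
   Only used with nonnegative bases. *)
Definition rpow (x a : R) : R :=
  if Rlt_dec 0 x then Rpower x a else 0.

Definition Gamma (z : R) : R :=
  RInt_gen (fun t => rpow t (z - 1) * exp (- t)) (at_right 0) (Rbar_locally p_infty).

(* Caputo derivative of order 1<beta<2 of a function f at x>0, given the
   second derivative f2 = f'' :
     D^beta f(x) = 1/Gamma(2-beta) int_0^x (x-s)^(1-beta) f''(s) ds
   (improper at s = x). *)
Definition caputo (beta : R) (f2 : R -> R) (x : R) : R :=
  / Gamma (2 - beta) *
  RInt_gen (fun s => rpow (x - s) (1 - beta) * f2 s) (at_point 0) (at_left x).

Definition derive_within (D : R -> Prop) (f : R -> R) (x l : R) : Prop :=
  forall eps, 0 < eps -> exists delta, 0 < delta /\
    forall y, D y -> Rabs (y - x) < delta ->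
      Rabs (f y - f x - l * (y - x)) <= eps * Rabs (y - x).

Definition I01 (x : R) : Prop := 0 <= x <= 1.

Definition cc (eta : R) (m : nat) : R :=
  (rpow (INR m - 1) eta - rpow (INR m) eta) / eta.

(* wtilde^beta_{j-1,0}, with wtilde_{-1,0} = 0; index r-m = j-1, i.e. m = r-j+1 *)
Definition wt0 (beta : R) (j r : nat) : R :=
  match j with
  | O => 0
  | S _ => let m := (r - j + 1)%nat in
           cc (3 - beta) m - INR m * cc (2 - beta) m
  end.

(* wtilde^beta_{j,1}, with wtilde_{r,1} = 0; index r-m = j, i.e. m = r-j *)
Definition wt1 (beta : R) (j r : nat) : R :=
  if Nat.eqb j r then 0
  else let m := (r - j)%nat in
       cc (3 - beta) m - (INR m - 1) * cc (2 - beta) m.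

Definition w (beta : R) (j r : nat) : R := wt0 beta j r - wt1 beta j r.

From Stdlib Require Import Reals Lra Lia Classical.
From Coquelicot Require Import Coquelicot.
Open Scope R_scope.

(* On each grid cell replace u'' by its linear interpolant.  Integrating the kernel
   (x_r - s)^(1-beta) against the interpolant is exact and yields h^(2-beta) times the
   weights w_{j,r}; the interpolation error on a cell of length h is at most h^2 M/8
   (Rolle's theorem twice).  Hence the quadrature error is at most h^2 M/8 times
   int_0^{x_r} (x_r - s)^(1-beta) ds = x_r^(2-beta)/(2-beta) <= 1/(2-beta), and
   (2-beta) Gamma(2-beta) = Gamma(3-beta).  On the last cell the kernel is singular; there
   the kernel times the interpolation error still extends continuously to x_r, because the
   interpolant is exact at x_r, so the improper integral is a limit of proper ones. *)

(** * Real powers *)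

Lemma rpow_Rpower y e : 0 < y -> rpow y e = Rpower y e.
Proof. intros H; unfold rpow; destruct (Rlt_dec 0 y); [reflexivity | lra]. Qed.

Lemma rpow_nonpos y e : y <= 0 -> rpow y e = 0.
Proof. intros H; unfold rpow; destruct (Rlt_dec 0 y); [lra | reflexivity]. Qed.

Lemma rpow_gt0 y e : 0 < y -> 0 < rpow y e.
Proof. intros H; rewrite rpow_Rpower by exact H; apply exp_pos. Qed.

Lemma rpow_ge0 y e : 0 <= rpow y e.
Proof.
  destruct (Rlt_le_dec 0 y) as [H | H].
  - now left; apply rpow_gt0.
  - now rewrite rpow_nonpos.
Qed.

Lemma rpow_plus_1 y e : 0 <= y -> rpow y (e + 1) = rpow y e * y.
Proof.
  intros [H | <-].
  - rewrite !rpow_Rpower, Rpower_plus, Rpower_1 by exact H; reflexivity.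
  - rewrite !rpow_nonpos by lra; ring.
Qed.

Lemma rpow_mult u v e : 0 <= u -> 0 <= v -> rpow (u * v) e = rpow u e * rpow v e.
Proof.
  intros [Hu | <-] [Hv | <-]; try (rewrite ?Rmult_0_l, ?Rmult_0_r, !rpow_nonpos by lra; ring).
  rewrite !rpow_Rpower, Rpower_mult_distr by nra; reflexivity.
Qed.

Lemma Rpower_1_base e : Rpower 1 e = 1.
Proof. unfold Rpower; rewrite ln_1, Rmult_0_r; apply exp_0. Qed.

Lemma rpow_le_1 y e : 0 < e -> 0 <= y <= 1 -> rpow y e <= 1.
Proof.
  intros He [[Hy | <-] Hy1]; [| rewrite rpow_nonpos; lra].
  rewrite rpow_Rpower, <- (Rpower_1_base e) by exact Hy.
  apply Rle_Rpower_l; lra.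
Qed.

Lemma is_derive_rpow t e : 0 < t -> is_derive (fun y => rpow y e) t (e * rpow t (e - 1)).
Proof.
  intros Ht; rewrite rpow_Rpower by exact Ht.
  apply is_derive_ext_loc with (fun y => Rpower y e).
  - apply (filter_imp (fun y => 0 < y)); [intros y Hy; symmetry; now apply rpow_Rpower |].
    now apply open_gt.
  - now apply is_derive_Reals, derivable_pt_lim_power.
Qed.

Lemma continuous_rpow_pos t e : 0 < t -> continuous (fun y => rpow y e) t.
Proof.
  intros Ht; apply (@ex_derive_continuous R_AbsRing R_NormedModule).
  eexists; now apply is_derive_rpow.
Qed.

Lemma continuous_rpow t e : 0 < e -> continuous (fun y => rpow y e) t.
Proof.
  intros He; destruct (Rtotal_order t 0) as [Ht | [-> | Ht]].
  - apply continuous_ext_loc with (fun _ => 0); [| apply continuous_const].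
    apply (filter_imp (fun y => y < 0)); [intros y Hy; now rewrite rpow_nonpos by lra |].
    now apply open_lt.
  - apply continuity_pt_filterlim, continuity_pt_locally; intros eps.
    exists (mkposreal (Rpower eps (/ e)) (exp_pos _)); intros y Hy.
    rewrite (rpow_nonpos 0), Rminus_0_r by lra.
    destruct (Rle_lt_dec y 0) as [Hy0 | Hy0].
    + rewrite rpow_nonpos, Rabs_R0 by exact Hy0; apply cond_pos.
    + rewrite Rabs_pos_eq, rpow_Rpower by (apply rpow_ge0 || exact Hy0).
      apply Rlt_le_trans with (Rpower (Rpower eps (/ e)) e).
      * apply Rlt_Rpower_l; [exact He |]. split; [exact Hy0 |].
        change (Rabs (y - 0) < Rpower eps (/ e)) in Hy.
        apply Rabs_lt_between in Hy; lra.
      * rewrite Rpower_mult, Rinv_l, Rpower_1 by (apply cond_pos || lra); lra.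
  - now apply continuous_rpow_pos.
Qed.

Lemma is_derive_rpow_shift x e s : s < x ->
  is_derive (fun s => rpow (x - s) e) s (- (e * rpow (x - s) (e - 1))).
Proof.
  intros Hs.
  assert (Hd : is_derive (fun s => x - s) s (-1)) by (auto_derive; auto; ring).
  pose proof (is_derive_comp _ _ s _ _ (is_derive_rpow (x - s) e ltac:(lra)) Hd) as H.
  unfold scal in H; simpl in H; unfold mult in H; simpl in H.
  now replace (- (e * rpow (x - s) (e - 1))) with (-1 * (e * rpow (x - s) (e - 1))) by ring.
Qed.

Lemma continuous_rpow_shift x e s : s < x -> continuous (fun s => rpow (x - s) e) s.
Proof.
  intros Hs; apply (@ex_derive_continuous R_AbsRing R_NormedModule).
  eexists; now apply is_derive_rpow_shift.
Qed.

Lemma continuous_rpow_shift_pos x e s : 0 < e -> continuous (fun s => rpow (x - s) e) s.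
Proof.
  intros He; apply (continuous_comp (fun s => x - s) (fun y => rpow y e)).
  - apply continuity_pt_filterlim, continuity_pt_minus;
      [apply continuity_pt_const; intros ? ?; reflexivity | apply continuity_pt_id].
  - now apply continuous_rpow.
Qed.

Lemma is_RInt_antiderivative (F f : R -> R) p q : p <= q ->
  (forall s, p <= s <= q -> is_derive F s (f s)) ->
  (forall s, p <= s <= q -> continuous f s) -> is_RInt f p q (F q - F p).
Proof.
  intros Hpq HF Hf; apply (is_RInt_derive F f); rewrite Rmin_left, Rmax_right by exact Hpq.
  - exact HF.
  - exact Hf.
Qed.

Definition kernel_int (x e p b : R) : R := (rpow (x - p) e - rpow (x - b) e) / e.

Lemma is_RInt_kernel x e p b : e <> 0 -> p <= b < x ->
  is_RInt (fun s => rpow (x - s) (e - 1)) p b (kernel_int x e p b).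
Proof.
  intros He Hpb; unfold kernel_int.
  replace ((rpow (x - p) e - rpow (x - b) e) / e)
    with (- rpow (x - b) e / e - - rpow (x - p) e / e) by (field; exact He).
  apply (is_RInt_antiderivative (fun s => - rpow (x - s) e / e)); [lra | |].
  - intros s Hs; pose proof (is_derive_rpow_shift x e s ltac:(lra)) as H.
    apply (is_derive_scal _ s (- / e)) in H.
    replace (rpow (x - s) (e - 1)) with (- / e * - (e * rpow (x - s) (e - 1)))
      by (field; exact He).
    eapply is_derive_ext; [| exact H]; intros t; simpl; field; exact He.
  - intros s Hs; apply continuous_rpow_shift; lra.
Qed.

Lemma continuous_kernel_int x e p b : 0 < e -> continuous (kernel_int x e p) b.
Proof.
  intros He.
  apply (continuous_ext (fun b => / e * (rpow (x - p) e - rpow (x - b) e)));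
    [intros c; unfold kernel_int, Rdiv; simpl; ring |].
  apply continuity_pt_filterlim, continuity_pt_scal, continuity_pt_minus.
  - apply continuity_pt_const; intros ? ?; reflexivity.
  - now apply continuity_pt_filterlim, continuous_rpow_shift_pos.
Qed.

Lemma is_RInt_rpow e p q : e <> 0 -> 0 < p <= q ->
  is_RInt (fun t => rpow t (e - 1)) p q ((rpow q e - rpow p e) / e).
Proof.
  intros He Hpq.
  replace ((rpow q e - rpow p e) / e) with (rpow q e / e - rpow p e / e) by (field; exact He).
  apply (is_RInt_antiderivative (fun t => rpow t e / e)); [lra | |].
  - intros s Hs; pose proof (is_derive_rpow s e ltac:(lra)) as H.
    apply (is_derive_scal _ s (/ e)) in H.
    replace (rpow s (e - 1)) with (/ e * (e * rpow s (e - 1))) by (field; exact He).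
    eapply is_derive_ext; [| exact H]; intros t; simpl; field; exact He.
  - intros s Hs; apply continuous_rpow_pos; lra.
Qed.

(** * Improper integrals *)

Lemma RInt_le_widen (f : R -> R) p' p q q' : p' <= p -> p <= q -> q <= q' ->
  ex_RInt f p' q' -> (forall t, p' <= t <= q' -> 0 <= f t) -> RInt f p q <= RInt f p' q'.
Proof.
  intros H1 H2 H3 Hex Hf.
  assert (Hpq' : ex_RInt f p q') by (apply (ex_RInt_Chasles_2 f p'); [lra | exact Hex]).
  assert (Hp'p : ex_RInt f p' p) by (apply (ex_RInt_Chasles_1 f p' p q'); [lra | exact Hex]).
  assert (Hpq : ex_RInt f p q) by (apply (ex_RInt_Chasles_1 f p q q'); [lra | exact Hpq']).
  assert (Hqq' : ex_RInt f q q') by (apply (ex_RInt_Chasles_2 f p q q'); [lra | exact Hpq']).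
  rewrite <- (RInt_Chasles f p' p q'), <- (RInt_Chasles f p q q') by assumption.
  assert (0 <= RInt f p' p) by (apply RInt_ge_0; [lra | exact Hp'p | intros; apply Hf; lra]).
  assert (0 <= RInt f q q') by (apply RInt_ge_0; [lra | exact Hqq' | intros; apply Hf; lra]).
  unfold plus; simpl; lra.
Qed.

Lemma is_RInt_gen_nonneg_bounded (f : R -> R) (B : R) :
  (forall p q, 0 < p <= q -> ex_RInt f p q) -> (forall t, 0 < t -> 0 <= f t) ->
  (forall p q, 0 < p <= q -> RInt f p q <= B) ->
  exists l, is_RInt_gen f (at_right 0) (Rbar_locally p_infty) l /\
    forall p q, 0 < p <= q -> RInt f p q <= l.
Proof.
  intros Hex Hf HB.
  set (S := fun y => exists p q, 0 < p <= q /\ y = RInt f p q).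
  destruct (completeness S) as [l [Hub Hlub]].
  - exists B; intros y [p [q [Hpq ->]]]; now apply HB.
  - exists (RInt f 1 1), 1, 1; split; [lra | reflexivity].
  - exists l; split; [| intros p q Hpq; apply Hub; now exists p, q].
    apply filterlimi_locally; intros eps.
    assert (Happrox : exists p0 q0, 0 < p0 <= q0 /\ l - eps < RInt f p0 q0).
    { apply NNPP; intros Hn.
      assert (l <= l - eps); [| pose proof (cond_pos eps); lra].
      apply Hlub; intros y [p [q [Hpq ->]]]; apply Rnot_lt_le; intros Hlt.
      apply Hn; now exists p, q. }
    destruct Happrox as [p0 [q0 [Hpq0 Hl]]].
    apply (Filter_prod _ _ _ (fun p => 0 < p <= p0) (fun q => q0 < q)).
    + exists (mkposreal p0 (proj1 Hpq0)); intros y Hy Hy0.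
      change (Rabs (y - 0) < p0) in Hy; apply Rabs_lt_between in Hy; lra.
    + now exists q0.
    + intros p q Hp Hq; exists (RInt f p q); split; [apply (RInt_correct f), Hex; lra |].
      change (Rabs (RInt f p q - l) < eps).
      assert (RInt f p0 q0 <= RInt f p q)
        by (apply RInt_le_widen; try lra; [apply Hex; lra | intros t Ht; apply Hf; lra]).
      assert (RInt f p q <= l) by (apply Hub; exists p, q; split; [lra | reflexivity]).
      apply Rabs_def1; lra.
Qed.

Lemma is_RInt_gen_at_left (f F : R -> R) p x : p < x ->
  (forall b, p < b < x -> is_RInt f p b (F b)) -> continuous F x ->
  is_RInt_gen f (at_point p) (at_left x) (F x).
Proof.
  intros Hpx Hf HF; apply filterlimi_locally; intros eps.
  destruct (proj1 (continuity_pt_locally F x) (proj2 (continuity_pt_filterlim F x) HF) eps)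
    as [d Hd].
  apply (Filter_prod _ _ _ (fun u => u = p) (fun b => p < b < x /\ Rabs (b - x) < d)).
  - reflexivity.
  - assert (Hm : 0 < Rmin d (x - p)) by (apply Rmin_glb_lt; [apply cond_pos | lra]).
    exists (mkposreal _ Hm); intros b Hb Hbx; change (Rabs (b - x) < Rmin d (x - p)) in Hb.
    pose proof (Rmin_l d (x - p)); pose proof (Rmin_r d (x - p)).
    apply Rabs_lt_between in Hb as Hb'; split; [lra |].
    eapply Rlt_le_trans; [exact Hb | assumption].
  - intros u b -> [Hb Hbd]; exists (F b); split; [now apply Hf |].
    change (Rabs (F b - F x) < eps); now apply Hd.
Qed.

Lemma continuous_le_at_left (f h : R -> R) p x : p < x -> continuous f x -> continuous h x ->
  (forall b, p < b < x -> f b <= h b) -> f x <= h x.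
Proof.
  intros Hpx Hf Hh Hle.
  apply (filterlim_le (F := at_left x) f h (f x) (h x)).
  - exists (mkposreal _ (proj2 (Rlt_0_minus p x) Hpx)); intros b Hb Hbx; apply Hle.
    change (Rabs (b - x) < x - p) in Hb; apply Rabs_lt_between in Hb; lra.
  - exact (filterlim_filter_le_1 _ (filter_le_within _) Hf).
  - exact (filterlim_filter_le_1 _ (filter_le_within _) Hh).
Qed.

(** * Sums over grid cells *)

Lemma sum_f_R0_shift_diff (u v : nat -> R) n : u 0%nat = 0 -> v n = 0 ->
  sum_f_R0 (fun j => u j - v j) n = sum_n_m (fun j => u j - v (pred j)) 1 n.
Proof.
  intros Hu Hv.
  enough (H : forall n, sum_f_R0 (fun j => u j - v j) n
                        = u 0%nat + sum_n_m (fun j => u j - v (pred j)) 1 n - v n).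
  { rewrite H, Hu, Hv; ring. }
  clear n Hv; induction n as [| n IH].
  - rewrite sum_n_m_zero by lia; simpl; unfold zero; simpl; ring.
  - rewrite tech5, IH, sum_n_Sm by lia; unfold plus; simpl; ring.
Qed.

Lemma is_RInt_sum_n_m (f : R -> R) (y V : nat -> R) n :
  (forall j, (1 <= j <= n)%nat -> is_RInt f (y (pred j)) (y j) (V j)) ->
  is_RInt f (y 0%nat) (y n) (sum_n_m V 1 n).
Proof.
  induction n as [| n IH]; intros HV.
  - rewrite sum_n_m_zero by lia; apply (is_RInt_point (V := R_NormedModule)).
  - rewrite sum_n_Sm by lia; apply (is_RInt_Chasles f _ (y n)).
    + apply IH; intros j Hj; apply HV; lia.
    + apply (HV (S n)); lia.
Qed.

Lemma Rabs_sum_n_m_le_telescope (e u : nat -> R) n :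
  (forall j, (1 <= j <= n)%nat -> Rabs (e j) <= u (pred j) - u j) ->
  Rabs (sum_n_m e 1 n) <= u 0%nat - u n.
Proof.
  induction n as [| n IH]; intros He.
  - rewrite sum_n_m_zero by lia; unfold zero; simpl; rewrite Rabs_R0; lra.
  - rewrite sum_n_Sm by lia; unfold plus; simpl.
    eapply Rle_trans; [apply Rabs_triang |].
    pose proof (IH ltac:(intros j Hj; apply He; lia)); pose proof (He (S n) ltac:(lia)).
    simpl in *; lra.
Qed.

Lemma sum_n_m_Rminus (a b : nat -> R) m n :
  sum_n_m (fun j => a j - b j) m n = sum_n_m a m n - sum_n_m b m n.
Proof.
  pose proof (sum_n_m_plus (G := R_AbelianMonoid) (fun j => a j - b j) b m n) as H.
  rewrite (sum_n_m_ext (fun j => plus (a j - b j) (b j)) a) in H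
    by (intros j; unfold plus; simpl; ring).
  unfold plus in H; simpl in H; lra.
Qed.

Lemma is_RInt_gen_cells_error (f : R -> R) (y T u : nat -> R) (Vn : R) n : (1 <= n)%nat ->
  (forall j, (1 <= j < n)%nat ->
     is_RInt f (y (pred j)) (y j) (RInt f (y (pred j)) (y j)) /\
     Rabs (RInt f (y (pred j)) (y j) - T j) <= u (pred j) - u j) ->
  is_RInt_gen f (at_point (y (pred n))) (at_left (y n)) Vn ->
  Rabs (Vn - T n) <= u (pred n) - u n ->
  exists I, is_RInt_gen f (at_point (y 0%nat)) (at_left (y n)) I /\
    Rabs (I - sum_n_m T 1 n) <= u 0%nat - u n.
Proof.
  intros Hn Hcells HVn HVn_bound.
  (* the last cell may be improper, so its integral is supplied separately *)
  set (V := (fun j => if Nat.eqb j n then Vn else RInt f (y (pred j)) (y j)) : nat -> R).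
  assert (HV : forall j, (1 <= j < n)%nat -> V j = RInt f (y (pred j)) (y j))
    by (intros j Hj; unfold V; now replace (Nat.eqb j n) with false
          by (symmetry; apply Nat.eqb_neq; lia)).
  exists (sum_n_m V 1 n); split.
  - destruct n as [| n']; [lia |]; rewrite sum_n_Sm by lia.
    apply (is_RInt_gen_Chasles (V := R_NormedModule) _ (y n')).
    + apply is_RInt_gen_at_point, is_RInt_sum_n_m; intros j Hj.
      rewrite HV by lia; apply Hcells; lia.
    + unfold V; rewrite Nat.eqb_refl; exact HVn.
  - replace (sum_n_m V 1 n - sum_n_m T 1 n) with (sum_n_m (fun j => V j - T j) 1 n).
    + apply Rabs_sum_n_m_le_telescope; intros j Hj.
      destruct (Nat.eq_dec j n) as [-> | Hjn].
      * unfold V; rewrite Nat.eqb_refl; exact HVn_bound.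
      * rewrite HV by lia; apply Hcells; lia.
    + apply sum_n_m_Rminus.
Qed.

(** * The Gamma function *)

Definition gamma_integrand (z t : R) : R := rpow t (z - 1) * exp (- t).

Lemma continuous_exp_opp t : continuous (fun t => exp (- t)) t.
Proof.
  apply continuity_pt_filterlim, (continuity_pt_comp (fun t => - t) exp).
  - apply continuity_pt_opp, continuity_pt_id.
  - apply derivable_continuous_pt, derivable_pt_exp.
Qed.

Lemma continuous_gamma_integrand z t : 0 < t -> continuous (gamma_integrand z) t.
Proof.
  intros Ht; apply (continuous_mult (fun t => rpow t (z - 1)) (fun t => exp (- t))).
  - now apply continuous_rpow_pos.
  - apply continuous_exp_opp.
Qed.

Lemma ex_RInt_gamma_integrand z p q : 0 < p <= q -> ex_RInt (gamma_integrand z) p q.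
Proof.
  intros Hpq; apply (@ex_RInt_continuous R_CompleteNormedModule).
  rewrite Rmin_left, Rmax_right by lra.
  intros t Ht; apply continuous_gamma_integrand; lra.
Qed.

Lemma gamma_integrand_ge0 z t : 0 <= gamma_integrand z t.
Proof. apply Rmult_le_pos; [apply rpow_ge0 | left; apply exp_pos]. Qed.

Lemma RInt_gamma_integrand_le_0_1 z p : 0 < z -> 0 < p <= 1 ->
  RInt (gamma_integrand z) p 1 <= / z.
Proof.
  intros Hz Hp; pose proof (is_RInt_rpow z p 1 ltac:(lra) ltac:(lra)) as HI.
  apply Rle_trans with ((rpow 1 z - rpow p z) / z).
  - apply (is_RInt_le (gamma_integrand z) (fun t => rpow t (z - 1)) p 1);
      [lra | apply (RInt_correct (gamma_integrand z)), ex_RInt_gamma_integrand; lra | exact HI |].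
    intros t Ht; unfold gamma_integrand.
    rewrite <- (Rmult_1_r (rpow t (z - 1))) at 2.
    apply Rmult_le_compat_l; [apply rpow_ge0 |].
    rewrite <- exp_0; left; apply exp_increasing; lra.
  - rewrite rpow_Rpower, Rpower_1_base by lra.
    pose proof (rpow_gt0 p z ltac:(lra)).
    apply (Rmult_le_reg_r z); [lra |]; field_simplify; lra.
Qed.

Lemma RInt_gamma_integrand_le_1_infty z q : z <= 2 -> 1 <= q ->
  RInt (gamma_integrand z) 1 q <= 2.
Proof.
  intros Hz Hq.
  assert (HI : is_RInt (fun t => t * exp (- t)) 1 q
                 (- (q + 1) * exp (- q) - - (1 + 1) * exp (- 1))).
  { apply (is_RInt_antiderivative (fun t => - (t + 1) * exp (- t))); [lra | |].
    - intros s _; auto_derive; [auto | ring].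
    - intros s _; apply (continuous_mult (fun t => t) (fun t => exp (- t))).
      + apply continuous_id.
      + apply continuous_exp_opp. }
  apply Rle_trans with (- (q + 1) * exp (- q) - - (1 + 1) * exp (- 1)).
  - apply (is_RInt_le (gamma_integrand z) (fun t => t * exp (- t)) 1 q);
      [lra | apply (RInt_correct (gamma_integrand z)), ex_RInt_gamma_integrand; lra | exact HI |].
    intros t Ht; unfold gamma_integrand.
    apply Rmult_le_compat_r; [left; apply exp_pos |].
    rewrite rpow_Rpower by lra; rewrite <- (Rpower_1 t) at 2 by lra.
    apply Rle_Rpower; lra.
  - pose proof (exp_pos (- q)).
    assert (exp (- 1) <= 1) by (rewrite <- exp_0; left; apply exp_increasing; lra).
    nra.
Qed.

Lemma RInt_gamma_integrand_le z p q : 0 < z <= 2 -> 0 < p <= q ->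
  RInt (gamma_integrand z) p q <= / z + 2.
Proof.
  intros Hz Hpq.
  set (p' := Rmin p 1); set (q' := Rmax q 1).
  assert (Hp' : 0 < p' <= 1 /\ p' <= p) by (unfold p', Rmin; destruct Rle_dec; lra).
  assert (Hq' : 1 <= q' /\ q <= q') by (unfold q', Rmax; destruct Rle_dec; lra).
  apply Rle_trans with (RInt (gamma_integrand z) p' q').
  { apply RInt_le_widen; try lra.
    - apply ex_RInt_gamma_integrand; lra.
    - intros; apply gamma_integrand_ge0. }
  rewrite <- (RInt_Chasles _ p' 1 q') by (apply ex_RInt_gamma_integrand; lra).
  unfold plus; simpl.
  pose proof (RInt_gamma_integrand_le_0_1 z p' ltac:(lra) ltac:(lra)).
  pose proof (RInt_gamma_integrand_le_1_infty z q' ltac:(lra) ltac:(lra)).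
  lra.
Qed.

Lemma Gamma_spec z : 0 < z <= 2 ->
  is_RInt_gen (gamma_integrand z) (at_right 0) (Rbar_locally p_infty) (Gamma z) /\ 0 < Gamma z.
Proof.
  intros Hz.
  destruct (is_RInt_gen_nonneg_bounded (gamma_integrand z) (/ z + 2)) as [l [Hl Hle]].
  - apply ex_RInt_gamma_integrand.
  - intros; apply gamma_integrand_ge0.
  - intros p q Hpq; now apply RInt_gamma_integrand_le.
  - replace (Gamma z) with l by (symmetry; exact (is_RInt_gen_unique _ _ Hl)).
    split; [exact Hl |].
    apply Rlt_le_trans with (RInt (gamma_integrand z) 1 2); [| apply Hle; lra].
    apply RInt_gt_0; [lra | | intros t Ht; apply continuous_gamma_integrand; lra].
    intros t Ht; apply Rmult_lt_0_compat; [apply rpow_gt0; lra | apply exp_pos].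
Qed.

Lemma rpow_mul_exp_at_0 a : 0 < a ->
  filterlim (fun t => rpow t a * exp (- t)) (at_right 0) (locally 0).
Proof.
  intros Ha; apply (filterlim_filter_le_1 _ (filter_le_within _)).
  replace 0 with (rpow 0 a * exp (- 0)) at 2 by (rewrite rpow_nonpos by lra; ring).
  apply (continuous_mult (fun t => rpow t a) (fun t => exp (- t))).
  - now apply continuous_rpow.
  - apply continuous_exp_opp.
Qed.

Lemma rpow_mul_exp_at_infty a : 0 < a <= 1 ->
  filterlim (fun t => rpow t a * exp (- t)) (Rbar_locally p_infty) (locally 0).
Proof.
  intros Ha.
  assert (Hlim : is_lim (fun t => / (exp t / t)) p_infty 0).
  { apply (is_lim_inv (fun t => exp t / t) p_infty p_infty); [apply is_lim_div_exp_p | easy]. }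
  apply (filterlim_le_le (fun _ => 0) (fun t => rpow t a * exp (- t)) (fun t => / (exp t / t))
    (Finite 0)); [| apply filterlim_const | exact Hlim].
  exists 1; intros t Ht; split; [apply Rmult_le_pos; [apply rpow_ge0 | left; apply exp_pos] |].
  rewrite rpow_Rpower, exp_Ropp by lra.
  replace (/ (exp t / t)) with (t * / exp t) by (field; split; [lra | apply Rgt_not_eq, exp_pos]).
  apply Rmult_le_compat_r; [left; apply Rinv_0_lt_compat, exp_pos |].
  rewrite <- (Rpower_1 t) at 2 by lra; apply Rle_Rpower; lra.
Qed.

Lemma is_derive_rpow_mul_exp a t : 0 < t ->
  is_derive (fun t => rpow t a * exp (- t)) t
    (a * gamma_integrand a t - gamma_integrand (a + 1) t).
Proof.
  intros Ht; unfold gamma_integrand; replace (a + 1 - 1) with a by ring.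
  assert (He : is_derive (fun t => exp (- t)) t (- exp (- t))) by (auto_derive; auto; ring).
  pose proof (is_derive_mult _ _ t _ _ (is_derive_rpow t a Ht) He Rmult_comm) as H.
  unfold plus, mult in H; simpl in H.
  rewrite !(rpow_Rpower t) in H |- * by exact Ht.
  replace (a * (Rpower t (a - 1) * exp (- t)) - Rpower t a * exp (- t))
    with (a * Rpower t (a - 1) * exp (- t) + Rpower t a * - exp (- t)) by ring.
  exact H.
Qed.

Lemma filter_prod_pos_intervals (P : R -> Prop) : (forall t, 0 < t -> P t) ->
  filter_prod (at_right 0) (Rbar_locally p_infty)
    (fun pq => forall t, Rmin (fst pq) (snd pq) <= t <= Rmax (fst pq) (snd pq) -> P t).
Proof.
  intros HP; apply (Filter_prod _ _ _ (fun p => 0 < p) (fun q => 0 < q)).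
  - exists (mkposreal 1 Rlt_0_1); intros y _ Hy; exact Hy.
  - now exists 0.
  - intros p q Hp Hq t Ht; apply HP; simpl in Ht.
    destruct (Rle_dec p q); [rewrite Rmin_left in Ht | rewrite Rmin_right in Ht]; lra.
Qed.

Lemma Gamma_succ a : 0 < a <= 1 -> Gamma (a + 1) = a * Gamma a.
Proof.
  intros Ha; destruct (Gamma_spec a ltac:(lra)) as [HG _].
  set (F := fun t => rpow t a * exp (- t)).
  (* integration by parts: F' = a t^(a-1) e^(-t) - t^a e^(-t) and F vanishes at both ends *)
  assert (HD : is_RInt_gen (Derive F) (at_right 0) (Rbar_locally p_infty) (0 - 0)).
  { apply is_RInt_gen_Derive.
    - apply filter_prod_pos_intervals; intros t Ht; eexists; now apply is_derive_rpow_mul_exp.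
    - apply filter_prod_pos_intervals; intros t Ht.
      apply continuous_ext_loc with (fun t => a * gamma_integrand a t - gamma_integrand (a + 1) t).
      + apply (filter_imp (fun t => 0 < t)); [| now apply open_gt].
        intros y Hy; symmetry; now apply is_derive_unique, is_derive_rpow_mul_exp.
      + apply continuity_pt_filterlim, continuity_pt_minus.
        * apply continuity_pt_scal, continuity_pt_filterlim, continuous_gamma_integrand, Ht.
        * apply continuity_pt_filterlim, continuous_gamma_integrand, Ht.
    - now apply rpow_mul_exp_at_0.
    - now apply rpow_mul_exp_at_infty. }
  unfold Gamma at 1.
  apply (is_RInt_gen_unique (Fa := at_right 0) (Fb := Rbar_locally p_infty)).
  apply (is_RInt_gen_ext (Fa := at_right 0) (Fb := Rbar_locally p_infty)
    (fun t => a * gamma_integrand a t - Derive F t)).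
  - apply (filter_imp (fun pq => forall t, Rmin (fst pq) (snd pq) <= t <= Rmax (fst pq) (snd pq) ->
              a * gamma_integrand a t - Derive F t = gamma_integrand (a + 1) t)).
    + intros pq H t Ht; apply H; lra.
    + apply filter_prod_pos_intervals; intros t Ht.
      replace (Derive F t) with (a * gamma_integrand a t - gamma_integrand (a + 1) t)
        by (symmetry; now apply is_derive_unique, is_derive_rpow_mul_exp).
      ring.
  - replace (a * Gamma a) with (a * Gamma a - (0 - 0)) by ring.
    exact (is_RInt_gen_minus _ _ _ _ (is_RInt_gen_scal _ a _ HG) HD).
Qed.

(** * Differentiability on [0, 1] *)

(* Functions differentiable only within [0, 1] are composed with [clamp01] to obtain
   functions continuous on all of R, as Coquelicot's integrability lemmas ask for
   two-sided continuity on closed intervals. *)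
Definition clamp01 (y : R) : R := Rmax 0 (Rmin 1 y).

Lemma I01_clamp01 y : I01 (clamp01 y).
Proof. unfold clamp01, I01, Rmax, Rmin; repeat destruct Rle_dec; lra. Qed.

Lemma clamp01_id y : I01 y -> clamp01 y = y.
Proof. unfold clamp01, I01, Rmax, Rmin; repeat destruct Rle_dec; lra. Qed.

Lemma Rabs_clamp01_le y z : Rabs (clamp01 z - clamp01 y) <= Rabs (z - y).
Proof.
  unfold clamp01, Rmax, Rmin; repeat destruct Rle_dec; unfold Rabs; repeat destruct Rcase_abs; lra.
Qed.

Lemma derive_within_lipschitz (D : R -> Prop) F y l : derive_within D F y l ->
  exists d, 0 < d /\ forall z, D z -> Rabs (z - y) < d ->
    Rabs (F z - F y) <= (Rabs l + 1) * Rabs (z - y).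
Proof.
  intros H; destruct (H 1 Rlt_0_1) as [d [Hd Hz]]; exists d; split; [exact Hd |].
  intros z Dz Hzy; specialize (Hz z Dz Hzy).
  replace (F z - F y) with ((F z - F y - l * (z - y)) + l * (z - y)) by ring.
  eapply Rle_trans; [apply Rabs_triang |]; rewrite Rabs_mult; lra.
Qed.

Lemma continuous_clamp01_comp (g g1 : R -> R) y :
  (forall y, I01 y -> derive_within I01 g y (g1 y)) -> continuous (fun y => g (clamp01 y)) y.
Proof.
  intros Hg; apply continuity_pt_filterlim, continuity_pt_locally; intros eps.
  destruct (derive_within_lipschitz _ _ _ _ (Hg _ (I01_clamp01 y))) as [d [Hd Hlip]].
  set (L := Rabs (g1 (clamp01 y)) + 1) in Hlip.
  assert (HL : 0 < L) by (pose proof (Rabs_pos (g1 (clamp01 y))); unfold L; lra).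
  assert (Hdelta : 0 < Rmin d (eps / L))
    by (apply Rmin_glb_lt; [exact Hd | apply Rdiv_lt_0_compat; [apply cond_pos | exact HL]]).
  exists (mkposreal _ Hdelta); intros u Hu; change (Rabs (u - y) < Rmin d (eps / L)) in Hu.
  pose proof (Rabs_clamp01_le y u) as Hc.
  assert (Hud : Rabs (u - y) < d) by (eapply Rlt_le_trans; [exact Hu | apply Rmin_l]).
  assert (Hue : Rabs (u - y) < eps / L) by (eapply Rlt_le_trans; [exact Hu | apply Rmin_r]).
  eapply Rle_lt_trans; [apply Hlip; [apply I01_clamp01 | lra] |].
  apply Rle_lt_trans with (L * Rabs (u - y)); [apply Rmult_le_compat_l; lra |].
  apply (Rmult_lt_compat_l L) in Hue; [| exact HL].
  replace (L * (eps / L)) with (pos eps) in Hue by (field; lra); exact Hue.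
Qed.

Lemma is_derive_of_derive_within (D : R -> Prop) F y l d : 0 < d ->
  (forall z, Rabs (z - y) < d -> D z) -> derive_within D F y l -> is_derive F y l.
Proof.
  intros Hd HD H; apply is_derive_Reals; intros eps Heps.
  destruct (H (eps / 2) ltac:(lra)) as [d' [Hd' Hz]].
  assert (Hm : 0 < Rmin d d') by (apply Rmin_glb_lt; assumption).
  exists (mkposreal _ Hm); intros k Hk0 Hk; simpl in Hk.
  assert (Hk1 : Rabs k < d) by (eapply Rlt_le_trans; [exact Hk | apply Rmin_l]).
  assert (Hk2 : Rabs k < d') by (eapply Rlt_le_trans; [exact Hk | apply Rmin_r]).
  assert (Hyk : Rabs (y + k - y) < d) by (replace (y + k - y) with k by ring; exact Hk1).
  specialize (Hz (y + k) (HD _ Hyk)); replace (y + k - y) with k in Hz by ring.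
  specialize (Hz Hk2).
  assert (Hk' : 0 < Rabs k) by (apply Rabs_pos_lt; exact Hk0).
  replace ((F (y + k) - F y) / k - l) with ((F (y + k) - F y - l * k) / k) by (field; exact Hk0).
  unfold Rdiv; rewrite Rabs_mult, Rabs_inv.
  apply Rle_lt_trans with (eps / 2 * Rabs k * / Rabs k).
  - apply Rmult_le_compat_r; [left; apply Rinv_0_lt_compat; exact Hk' | exact Hz].
  - field_simplify; lra.
Qed.

Lemma is_derive_interior (F F1 : R -> R) y :
  (forall y, I01 y -> derive_within I01 F y (F1 y)) -> 0 < y < 1 -> is_derive F y (F1 y).
Proof.
  intros HF Hy; apply (is_derive_of_derive_within I01 _ _ _ (Rmin y (1 - y))).
  - apply Rmin_glb_lt; lra.
  - intros z Hz; apply Rabs_lt_between in Hz.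
    pose proof (Rmin_l y (1 - y)); pose proof (Rmin_r y (1 - y)); unfold I01; lra.
  - apply HF; unfold I01; lra.
Qed.

Lemma Rolle_is_derive (f df : R -> R) a b : a < b ->
  (forall x, a < x < b -> is_derive f x (df x)) ->
  (forall x, a <= x <= b -> continuous f x) -> f a = f b ->
  exists c, a < c < b /\ df c = 0.
Proof.
  intros Hab Hd Hc Hf.
  set (pr := fun x (H : a < x < b) =>
    exist (fun l => derivable_pt_lim f x l) (df x) (proj1 (is_derive_Reals _ _ _) (Hd x H))).
  destruct (Rolle f a b pr (fun x Hx => proj2 (continuity_pt_filterlim f x) (Hc x Hx)) Hab Hf)
    as [c [P Hc0]].
  now exists c.
Qed.

Lemma Rolle_twice (f df ddf : R -> R) a b c : a < b < c ->
  (forall x, a < x < c -> is_derive f x (df x)) ->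
  (forall x, a < x < c -> is_derive df x (ddf x)) ->
  (forall x, a <= x <= c -> continuous f x) -> f a = 0 -> f b = 0 -> f c = 0 ->
  exists xi, a < xi < c /\ ddf xi = 0.
Proof.
  intros Habc Hdf Hddf Hf Ha Hb Hc.
  destruct (Rolle_is_derive f df a b) as [c1 [Hc1 Hdc1]]; try lra.
  { intros x Hx; apply Hdf; lra. }
  { intros x Hx; apply Hf; lra. }
  destruct (Rolle_is_derive f df b c) as [c2 [Hc2 Hdc2]]; try lra.
  { intros x Hx; apply Hdf; lra. }
  { intros x Hx; apply Hf; lra. }
  destruct (Rolle_is_derive df ddf c1 c2) as [xi [Hxi Hdxi]]; try lra.
  - intros x Hx; apply Hddf; lra.
  - intros x Hx; apply (@ex_derive_continuous R_AbsRing R_NormedModule).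
    eexists; apply Hddf; lra.
  - exists xi; split; [lra | exact Hdxi].
Qed.

(** * Piecewise linear quadrature of the Caputo integral *)

Definition lin_interp (g : R -> R) (p q s : R) : R := (g p * (q - s) + g q * (s - p)) / (q - p).

(* [int_p^b (x - s)^(a-1) lin_interp g p q s ds], using
   [lin_interp g p q s = lin_interp g p q x + (g p - g q) / (q - p) * (x - s)]. *)
Definition kernel_lin_int (g : R -> R) (x a p q b : R) : R :=
  lin_interp g p q x * kernel_int x a p b + (g p - g q) / (q - p) * kernel_int x (a + 1) p b.

Lemma kernel_lin_int_grid beta (g : R -> R) h r j : 0 < h -> 1 < beta < 2 -> (1 <= j <= r)%nat ->
  kernel_lin_int g (INR r * h) (2 - beta) (INR (pred j) * h) (INR j * h) (INR j * h) =
  rpow h (2 - beta) * (wt0 beta j r * g (INR j * h) - wt1 beta (pred j) r * g (INR (pred j) * h)).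
Proof.
  intros Hh Hb Hj; set (a := 2 - beta); set (m := (r - j + 1)%nat).
  assert (Em : INR r = INR m + INR (pred j)) by (rewrite <- plus_INR; f_equal; unfold m; lia).
  assert (Ej : INR j = INR (pred j) + 1) by (rewrite <- S_INR; f_equal; lia).
  assert (Hm1 : 1 <= INR m) by (apply (le_INR 1); unfold m; lia).
  unfold kernel_lin_int, lin_interp, kernel_int.
  replace (INR r * h - INR (pred j) * h) with (INR m * h) by (rewrite Em; ring).
  replace (INR r * h - INR j * h) with ((INR m - 1) * h) by (rewrite Em, Ej; ring).
  replace (INR j * h - INR j * h) with 0 by ring.
  replace (INR j * h - INR (pred j) * h) with h by (rewrite Ej; ring).
  replace (INR j * h - INR r * h) with (- ((INR m - 1) * h)) by (rewrite Em, Ej; ring).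
  rewrite !rpow_mult, !(rpow_plus_1 h) by lra.
  destruct j as [| j']; [lia |]; simpl pred.
  unfold wt0, wt1; fold m.
  replace (Nat.eqb j' r) with false by (symmetry; apply Nat.eqb_neq; lia).
  replace (r - j')%nat with m by (unfold m; lia).
  unfold cc; replace (3 - beta) with (a + 1) by (unfold a; ring).
  assert (a <> 0) by (unfold a; lra); assert (a + 1 <> 0) by (unfold a; lra).
  fold a; field; repeat split; lra.
Qed.

Lemma grid_weights_sum beta (g : R -> R) h r : 0 < h -> 1 < beta < 2 ->
  rpow h (2 - beta) * sum_f_R0 (fun j => w beta j r * g (INR j * h)) r =
  sum_n_m (fun j => kernel_lin_int g (INR r * h) (2 - beta)
                      (INR (pred j) * h) (INR j * h) (INR j * h)) 1 r.
Proof.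
  intros Hh Hb; rewrite scal_sum.
  rewrite (sum_eq _ (fun j => rpow h (2 - beta) * wt0 beta j r * g (INR j * h)
                              - rpow h (2 - beta) * wt1 beta j r * g (INR j * h)))
    by (intros j _; unfold w; ring).
  rewrite sum_f_R0_shift_diff; [| unfold wt0; ring | unfold wt1; rewrite Nat.eqb_refl; ring].
  apply sum_n_m_ext_loc; intros j Hj.
  rewrite kernel_lin_int_grid by (lra || lia); simpl; ring.
Qed.

Section CaputoApproximation.

Variables (g g1 g2 : R -> R) (M : R).
Hypothesis Hg : forall y, I01 y -> derive_within I01 g y (g1 y).
Hypothesis Hg1 : forall y, I01 y -> derive_within I01 g1 y (g2 y).
Hypothesis HM : forall y, I01 y -> Rabs (g2 y) <= M.

Lemma lin_interp_error p q s : 0 <= p -> p < q -> q <= 1 -> p <= s <= q ->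
  Rabs (g s - lin_interp g p q s) <= M / 2 * ((s - p) * (q - s)).
Proof.
  intros Hp Hpq Hq Hs; unfold lin_interp.
  destruct (Req_dec s p) as [-> | Hsp].
  { replace (g p - _) with 0 by (field; lra); rewrite Rabs_R0, Rminus_diag, Rmult_0_l; lra. }
  destruct (Req_dec s q) as [-> | Hsq].
  { replace (g q - _) with 0 by (field; lra); rewrite Rabs_R0, Rminus_diag, Rmult_0_r; lra. }
  fold (lin_interp g p q s).
  set (G := fun y => g (clamp01 y)).
  assert (HG : forall y, I01 y -> G y = g y) by (intros y Hy; unfold G; now rewrite clamp01_id).
  assert (HGd : forall y, I01 y -> derive_within I01 G y (g1 y)).
  { intros y Hy eps Heps; destruct (Hg y Hy eps Heps) as [d [Hd Hz]].
    exists d; split; [exact Hd |]; intros z Iz Hzy; rewrite !HG by assumption; now apply Hz. }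
  (* [K] is chosen so that [phi] also vanishes at [s]. *)
  set (K := (g s - lin_interp g p q s) / ((s - p) * (s - q))).
  set (phi := fun y => G y - (lin_interp g p q y + K * (y - p) * (y - q))).
  destruct (Rolle_twice phi (fun y => g1 y - ((g q - g p) / (q - p) + K * ((y - q) + (y - p))))
              (fun y => g2 y - 2 * K) p s q) as [xi [Hxi Hdxi]]; try lra.
  - intros y Hy; unfold phi, lin_interp; apply (is_derive_minus G).
    + apply is_derive_interior; [exact HGd | lra].
    + auto_derive; [lra | field; lra].
  - intros y Hy; apply (is_derive_minus g1); [apply is_derive_interior; [exact Hg1 | lra] |].
    auto_derive; [auto | ring].
  - intros y _; apply (continuous_minus G); [now apply (continuous_clamp01_comp g g1) |].
    apply (@ex_derive_continuous R_AbsRing R_NormedModule); unfold lin_interp; auto_derive; lra.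
  - unfold phi, lin_interp; rewrite HG by (unfold I01; lra); field; lra.
  - unfold phi, K; rewrite HG by (unfold I01; lra); field; split; lra.
  - unfold phi, lin_interp; rewrite HG by (unfold I01; lra); field; lra.
  - assert (HK : Rabs K <= M / 2).
    { replace K with (g2 xi / 2) by lra; unfold Rdiv.
      rewrite Rabs_mult, (Rabs_pos_eq (/ 2)) by lra.
      apply Rmult_le_compat_r; [lra | apply HM; unfold I01; lra]. }
    replace (g s - lin_interp g p q s) with (K * ((s - p) * (s - q)))
      by (unfold K; field; split; lra).
    rewrite Rabs_mult, (Rabs_left1 ((s - p) * (s - q))) by nra.
    replace (- ((s - p) * (s - q))) with ((s - p) * (q - s)) by ring.
    apply Rmult_le_compat_r; [nra | exact HK].
Qed.

Section Kernel.

Variables (x a : R).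
Hypothesis Ha : 0 < a.

Let G (y : R) : R := g (clamp01 y).

Let defect (p q s : R) : R := rpow (x - s) (a - 1) * (G s - lin_interp g p q s).

Lemma is_RInt_kernel_lin p q b : p < q -> p <= b < x ->
  is_RInt (fun s => rpow (x - s) (a - 1) * lin_interp g p q s) p b (kernel_lin_int g x a p q b).
Proof.
  intros Hpq Hb.
  apply (is_RInt_ext (V := R_NormedModule) (fun s => lin_interp g p q x * rpow (x - s) (a - 1)
                                  + (g p - g q) / (q - p) * rpow (x - s) (a + 1 - 1))).
  - intros s Hs; rewrite Rmin_left, Rmax_right in Hs by lra.
    replace (a + 1 - 1) with (a - 1 + 1) by ring; rewrite rpow_plus_1 by lra.
    unfold lin_interp; simpl; field; lra.
  - apply (is_RInt_plus (fun s => lin_interp g p q x * rpow (x - s) (a - 1))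
                        (fun s => (g p - g q) / (q - p) * rpow (x - s) (a + 1 - 1)));
      apply (is_RInt_scal (fun s => rpow (x - s) (_ - 1))), is_RInt_kernel; lra.
Qed.

Lemma defect_bound p q s : 0 <= p -> p <= s <= q -> q <= 1 -> p < q -> s < x ->
  Rabs (defect p q s) <= M / 8 * (q - p) ^ 2 * rpow (x - s) (a - 1).
Proof.
  intros Hp Hs Hq Hpq Hsx; unfold defect, G; rewrite clamp01_id by (unfold I01; lra).
  rewrite Rabs_mult, Rabs_pos_eq by apply rpow_ge0; rewrite Rmult_comm.
  apply Rmult_le_compat_r; [apply rpow_ge0 |].
  eapply Rle_trans; [now apply lin_interp_error |].
  assert (HM0 : 0 <= M) by (eapply Rle_trans; [apply Rabs_pos | apply (HM p); unfold I01; lra]).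
  (* AM-GM: (s - p) (q - s) <= (q - p)^2 / 4 *)
  assert ((s - p) * (q - s) <= (q - p) ^ 2 / 4) by (pose proof (pow2_ge_0 (q + p - 2 * s)); nra).
  replace (M / 8 * (q - p) ^ 2) with (M / 2 * ((q - p) ^ 2 / 4)) by field.
  apply Rmult_le_compat_l; lra.
Qed.

Lemma continuous_defect p q s : p < q -> s < x -> continuous (defect p q) s.
Proof.
  intros Hpq Hs; apply (continuous_mult (fun s => rpow (x - s) (a - 1))).
  - now apply continuous_rpow_shift.
  - apply (continuous_minus G); [now apply (continuous_clamp01_comp g g1) |].
    apply (@ex_derive_continuous R_AbsRing R_NormedModule); unfold lin_interp; auto_derive; lra.
Qed.

Lemma kernel_interval_split p q b : 0 <= p -> p <= b <= q -> q <= 1 -> p < q -> b < x ->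
  is_RInt (fun s => rpow (x - s) (a - 1) * g s) p b
    (kernel_lin_int g x a p q b + RInt (defect p q) p b) /\
  Rabs (RInt (defect p q) p b) <= M / 8 * (q - p) ^ 2 * kernel_int x a p b.
Proof.
  intros Hp Hb Hq Hpq Hbx.
  assert (HD : is_RInt (defect p q) p b (RInt (defect p q) p b)).
  { apply (RInt_correct (defect p q)), (@ex_RInt_continuous R_CompleteNormedModule).
    rewrite Rmin_left, Rmax_right by lra; intros s Hs; apply continuous_defect; lra. }
  split.
  - apply (is_RInt_ext (V := R_NormedModule)
             (fun s => rpow (x - s) (a - 1) * lin_interp g p q s + defect p q s)).
    + intros s Hs; rewrite Rmin_left, Rmax_right in Hs by lra.
      unfold defect, G; rewrite clamp01_id by (unfold I01; lra); simpl; ring.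
    + apply (is_RInt_plus (V := R_NormedModule)); [apply is_RInt_kernel_lin; lra | exact HD].
  - apply (norm_RInt_le (defect p q) (fun s => M / 8 * (q - p) ^ 2 * rpow (x - s) (a - 1)) p b);
      [lra | | exact HD |].
    + intros s Hs; apply defect_bound; lra.
    + apply (is_RInt_scal (fun s => rpow (x - s) (a - 1))), is_RInt_kernel; lra.
Qed.

Lemma continuous_defect_last p s : 0 <= p < x -> x <= 1 -> continuous (defect p x) s.
Proof.
  intros Hp Hx; destruct (Rlt_le_dec s x) as [Hs | Hs]; [apply continuous_defect; lra |].
  assert (HM0 : 0 <= M) by (eapply Rle_trans; [apply Rabs_pos | apply (HM p); unfold I01; lra]).
  set (C := M / 2 * (x - p)).
  assert (Hbound : forall t, p < t -> Rabs (defect p x t) <= C * rpow (x - t) a).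
  { intros t Ht; destruct (Rlt_le_dec t x) as [Htx | Htx].
    - unfold defect, G; rewrite clamp01_id by (unfold I01; lra).
      rewrite Rabs_mult, Rabs_pos_eq by apply rpow_ge0.
      replace a with (a - 1 + 1) at 2 by ring; rewrite rpow_plus_1 by lra.
      apply Rle_trans with (rpow (x - t) (a - 1) * (M / 2 * ((t - p) * (x - t)))).
      + apply Rmult_le_compat_l; [apply rpow_ge0 | apply lin_interp_error; lra].
      + pose proof (rpow_ge0 (x - t) (a - 1)).
        replace (rpow (x - t) (a - 1) * (M / 2 * ((t - p) * (x - t))))
          with (M / 2 * (rpow (x - t) (a - 1) * (x - t)) * (t - p)) by ring.
        replace (C * (rpow (x - t) (a - 1) * (x - t)))
          with (M / 2 * (rpow (x - t) (a - 1) * (x - t)) * (x - p)) by (unfold C; ring).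
        apply Rmult_le_compat_l; [apply Rmult_le_pos; nra | lra].
    - unfold defect; rewrite rpow_nonpos, Rmult_0_l, Rabs_R0 by lra.
      apply Rmult_le_pos; [unfold C; nra | apply rpow_ge0]. }
  assert (Hcont : forall c, continuous (fun t => c * rpow (x - t) a) s).
  { intros c; apply continuity_pt_filterlim, continuity_pt_scal.
    now apply continuity_pt_filterlim, continuous_rpow_shift_pos. }
  assert (Hvanish : rpow (x - s) a = 0) by (apply rpow_nonpos; lra).
  apply (filterlim_le_le (fun t => - C * rpow (x - t) a) (defect p x) (fun t => C * rpow (x - t) a)
           (Finite (defect p x s))).
  - apply (filter_imp (fun t => p < t)); [| apply open_gt; lra].
    intros t Ht; pose proof (proj1 (Rabs_le_between _ _) (Hbound t Ht)); lra.
  - replace (defect p x s) with (- C * rpow (x - s) a)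
      by (unfold defect; rewrite Hvanish, rpow_nonpos by lra; ring).
    apply Hcont.
  - replace (defect p x s) with (C * rpow (x - s) a)
      by (unfold defect; rewrite Hvanish, rpow_nonpos by lra; ring).
    apply Hcont.
Qed.

Lemma kernel_last_interval p : 0 <= p < x -> x <= 1 ->
  exists V, is_RInt_gen (fun s => rpow (x - s) (a - 1) * g s) (at_point p) (at_left x) V /\
    Rabs (V - kernel_lin_int g x a p x x) <= M / 8 * (x - p) ^ 2 * kernel_int x a p x.
Proof.
  intros Hp Hx.
  set (E := (fun b => RInt (defect p x) p b) : R -> R).
  assert (HE : continuous E x).
  { apply (@ex_derive_continuous R_AbsRing R_NormedModule); exists (defect p x x).
    apply (is_derive_RInt (defect p x) E p x); [| now apply continuous_defect_last].
    apply (filter_imp (fun b => p < b)); [| apply open_gt; lra].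
    intros b Hb; apply (RInt_correct (defect p x)), (@ex_RInt_continuous R_CompleteNormedModule).
    intros; now apply continuous_defect_last. }
  set (F := fun b => kernel_lin_int g x a p x b + E b).
  assert (HF : continuous F x).
  { apply continuity_pt_filterlim, continuity_pt_plus; apply continuity_pt_filterlim; [| exact HE].
    apply continuity_pt_filterlim, continuity_pt_plus; apply continuity_pt_scal;
      apply continuity_pt_filterlim, continuous_kernel_int; lra. }
  exists (F x); split.
  - apply is_RInt_gen_at_left; [lra | | exact HF].
    intros b Hb; apply kernel_interval_split; lra.
  - replace (F x - kernel_lin_int g x a p x x) with (E x) by (unfold F; ring).
    apply (continuous_le_at_left (fun b => Rabs (E b))
             (fun b => M / 8 * (x - p) ^ 2 * kernel_int x a p b) p x); [lra | | |].
    + apply (continuous_comp E Rabs); [exact HE | apply continuous_Rabs].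
    + apply continuity_pt_filterlim, continuity_pt_scal.
      apply continuity_pt_filterlim, continuous_kernel_int; lra.
    + intros b Hb; apply kernel_interval_split; lra.
Qed.

Lemma kernel_interval_estimate p q : 0 <= p < q -> q < x -> q <= 1 ->
  is_RInt (fun s => rpow (x - s) (a - 1) * g s) p q
    (RInt (fun s => rpow (x - s) (a - 1) * g s) p q) /\
  Rabs (RInt (fun s => rpow (x - s) (a - 1) * g s) p q - kernel_lin_int g x a p q q)
    <= M / 8 * (q - p) ^ 2 * kernel_int x a p q.
Proof.
  intros Hpq Hqx Hq.
  destruct (kernel_interval_split p q q) as [HI Hbound]; try lra.
  rewrite (is_RInt_unique _ _ _ _ HI); split; [exact HI |].
  unfold Rminus; rewrite Rplus_comm, <- Rplus_assoc, Rplus_opp_l, Rplus_0_l; exact Hbound.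
Qed.

End Kernel.

Lemma caputo_integral_grid_error beta h r : 1 < beta < 2 -> 0 < h -> (1 <= r)%nat ->
  INR r * h <= 1 ->
  exists I, is_RInt_gen (fun s => rpow (INR r * h - s) (1 - beta) * g s)
              (at_point 0) (at_left (INR r * h)) I /\
    Rabs (I - rpow h (2 - beta) * sum_f_R0 (fun j => w beta j r * g (INR j * h)) r)
      <= M / 8 * h ^ 2 * (rpow (INR r * h) (2 - beta) / (2 - beta)).
Proof.
  intros Hb Hh Hr Hx.
  rewrite grid_weights_sum by lra.
  set (a := 2 - beta); set (x := INR r * h) in *; set (y := fun j : nat => INR j * h).
  assert (Ha : 0 < a) by (unfold a; lra).
  replace (1 - beta) with (a - 1) by (unfold a; ring).
  assert (Hy0 : y 0%nat = 0) by (unfold y; simpl; ring).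
  assert (Hystep : forall j, (1 <= j)%nat -> y j - y (pred j) = h).
  { intros j Hj; unfold y; destruct j as [| j]; [lia |]; rewrite S_INR; simpl; ring. }
  assert (Hyrange : forall j, (j <= r)%nat -> 0 <= y j <= x).
  { intros j Hj; unfold y, x; split; [apply Rmult_le_pos; [apply pos_INR | lra] |].
    apply Rmult_le_compat_r; [lra | now apply le_INR]. }
  assert (Hylt : forall j, (j < r)%nat -> y j < x).
  { intros j Hj; apply Rmult_lt_compat_r; [lra | now apply lt_INR]. }
  set (u := fun j => M / 8 * h ^ 2 * (rpow (x - y j) a / a)).
  assert (Hu : forall j, (1 <= j <= r)%nat ->
            M / 8 * (y j - y (pred j)) ^ 2 * kernel_int x a (y (pred j)) (y j) = u (pred j) - u j).
  { intros j Hj; unfold u, kernel_int; rewrite Hystep by lia; field; lra. }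
  replace (M / 8 * h ^ 2 * (rpow x a / a)) with (u 0%nat - u r)
    by (unfold u; rewrite Hy0, Rminus_0_r; unfold y; fold x; rewrite Rminus_diag,
          (rpow_nonpos 0) by lra; field; lra).
  rewrite <- Hy0; fold (y r).
  destruct (kernel_last_interval x a Ha (y (pred r))) as [Vr [HVr HVr_bound]];
    [split; [apply Hyrange; lia | apply Hylt; lia] | exact Hx |].
  apply (is_RInt_gen_cells_error _ y _ u Vr); [exact Hr | | exact HVr |].
  - intros j Hj; rewrite <- Hu by lia.
    pose proof (Hystep j ltac:(lia)); pose proof (Hyrange (pred j) ltac:(lia)).
    pose proof (Hyrange j ltac:(lia)).
    apply kernel_interval_estimate; [exact Ha | lra | apply Hylt; lia | lra].
  - pose proof (Hu r ltac:(lia)) as Hur; change (y r) with x in Hur.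
    rewrite <- Hur; exact HVr_bound.
Qed.

Lemma caputo_grid_error beta h r : 1 < beta < 2 -> 0 < h -> (1 <= r)%nat -> INR r * h <= 1 ->
  Rabs (caputo beta g (INR r * h)
        - rpow h (2 - beta) / Gamma (2 - beta) * sum_f_R0 (fun j => w beta j r * g (INR j * h)) r)
  <= h ^ 2 * M / (8 * Gamma (3 - beta)).
Proof.
  intros Hb Hh Hr Hx.
  destruct (caputo_integral_grid_error beta h r Hb Hh Hr Hx) as [I [HI Hbound]].
  set (S := sum_f_R0 (fun j => w beta j r * g (INR j * h)) r) in *.
  set (a := 2 - beta) in *; assert (Ha : 0 < a <= 1) by (unfold a; lra).
  destruct (Gamma_spec a ltac:(lra)) as [_ HG].
  replace (3 - beta) with (a + 1) by (unfold a; ring); rewrite Gamma_succ by exact Ha.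
  assert (Hcap : caputo beta g (INR r * h) = / Gamma a * I).
  { unfold caputo; f_equal; apply is_RInt_gen_unique; exact HI. }
  rewrite Hcap.
  replace (/ Gamma a * I - rpow h a / Gamma a * S) with (/ Gamma a * (I - rpow h a * S))
    by (field; lra).
  rewrite Rabs_mult, Rabs_inv, (Rabs_pos_eq (Gamma a)) by lra.
  assert (HM0 : 0 <= M) by (eapply Rle_trans; [apply Rabs_pos | apply (HM 0); unfold I01; lra]).
  assert (Hxa : rpow (INR r * h) a <= 1).
  { apply rpow_le_1; [lra |]; split; [apply Rmult_le_pos; [apply pos_INR | lra] | exact Hx]. }
  apply Rle_trans with (/ Gamma a * (M / 8 * h ^ 2 * (1 / a))).
  - apply Rmult_le_compat_l; [left; apply Rinv_0_lt_compat; lra |].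
    eapply Rle_trans; [exact Hbound |].
    apply Rmult_le_compat_l; [pose proof (pow2_ge_0 h); apply Rmult_le_pos; lra |].
    unfold Rdiv; apply Rmult_le_compat_r; [left; apply Rinv_0_lt_compat; lra | exact Hxa].
  - right; field; lra.
Qed.

End CaputoApproximation.

Theorem theorem5p1
  (T : R) (M N : nat) (beta : R) (k : nat)
  (u d1 d2 d3 d4 : R -> R -> R) (Mu : R) :
  0 < T -> (0 < M)%nat -> (0 < N)%nat ->
  1 < beta < 2 -> (k <= M - 1)%nat ->
  (* d1..d4 are the successive x-derivatives of u on Omega = [0,1] x [0,T] *)
  (forall t, 0 <= t <= T -> forall x, I01 x ->
     derive_within I01 (fun y => u y t) x (d1 x t) /\
     derive_within I01 (fun y => d1 y t) x (d2 x t) /\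
     derive_within I01 (fun y => d2 y t) x (d3 x t) /\
     derive_within I01 (fun y => d3 y t) x (d4 x t)) ->
  (* d4 = d^4 u / dx^4 is continuous on Omega *)
  (forall x t, I01 x -> 0 <= t <= T ->
     forall eps, 0 < eps -> exists delta, 0 < delta /\
       forall y s, I01 y -> 0 <= s <= T -> Rabs (y - x) < delta -> Rabs (s - t) < delta ->
         Rabs (d4 y s - d4 x t) < eps) ->
  (* Mu = sup over Omega of |d^4 u / dx^4| *)
  is_lub (fun z => exists x t, I01 x /\ 0 <= t <= T /\ z = Rabs (d4 x t)) Mu ->
  let tau := T / INR M in
  let h := / INR N in
  let tk1 := INR (k + 1) * tau in
  let xr := fun r : nat => INR r * h in
  let nu := rpow h (2 - beta) / Gamma (2 - beta) in
  let Rh := fun r : nat =>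
    caputo beta (fun s => d2 s tk1) (xr r)
    - nu * sum_f_R0 (fun j => w beta j r * d2 (xr j) tk1) r in
  forall r : nat, (1 <= r <= N - 1)%nat ->
    Rabs (Rh r) <= h ^ 2 * Mu / (8 * Gamma (3 - beta)).
Proof.
  intros HT HM HN Hb Hk Hder _ Hlub tau h tk1 xr nu Rh r Hr.
  assert (HMpos : 0 < INR M) by (apply lt_0_INR; lia).
  assert (Ht : 0 <= tk1 <= T).
  { assert (INR (k + 1) <= INR M) by (apply le_INR; lia).
    pose proof (pos_INR (k + 1)).
    unfold tk1, tau; split; [apply Rmult_le_pos; [lra | apply Rdiv_le_0_compat; lra] |].
    replace (INR (k + 1) * (T / INR M)) with (T * (INR (k + 1) / INR M)) by (field; lra).
    rewrite <- (Rmult_1_r T) at 2; apply Rmult_le_compat_l; [lra |].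
    apply (Rmult_le_reg_r (INR M)); [exact HMpos | field_simplify; lra]. }
  assert (HNpos : 0 < INR N) by (apply lt_0_INR; lia).
  assert (Hh : 0 < h) by (apply Rinv_0_lt_compat; exact HNpos).
  assert (Hx : INR r * h <= 1).
  { unfold h; apply (Rmult_le_reg_r (INR N)); [exact HNpos |].
    field_simplify; [apply le_INR; lia | lra]. }
  unfold Rh, nu, xr.
  apply (caputo_grid_error (fun s => d2 s tk1) (fun s => d3 s tk1) (fun s => d4 s tk1) Mu);
    [| | | exact Hb | exact Hh | lia | exact Hx].
  - intros y Hy; apply (Hder tk1 Ht y Hy).
  - intros y Hy; apply (Hder tk1 Ht y Hy).
  - intros y Hy; apply (proj1 Hlub); exists y, tk1; auto.
Qed.
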